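(* Let $\mathcal{P}$ be a hereditary property of ordered graphs. Suppose that for arbitrarily large values of $k$ some ordered graph in $\mathcal{P}$ contains a $k$-structure of Type 1 or of Type 2. Then $|\mathcal{P}_n| \geqslant 2^{n-1}$ for every $n \in \mathbb{N}$.
   Context: Ordered graphs of order $n$ have vertex set $[n]$ with the natural order; a hereditary property is a collection of ordered graphs closed under order-preserving isomorphism and induced ordered subgraphs; $\mathcal{P}_n$ is the set of members with vertex set $[n]$. A $k$-structure of Type 1 in $G$ consists of vertices $y$ and $x_1<\dots<x_{2k}$ with $y<x_1$ or $y>x_{2k}$, such that for $1\leqslant i<2k$, $yx_i\in E(G)$ iff $yx_{i+1}\notin E(G)$. A $k$-structure of Type 2 is one of Type 2(a): vertices $x_1<\dots<x_{2k}<y_1<\dots<y_{2k}$, or of Type 2(b): vertices $x_1<\dots<x_{2k}<y_{2k}<\dots<y_1$, in either case such that for $1\leqslant i<2k$, $x_iy_i\in E(G)$ iff $x_{i+1}y_{i+1}\notin E(G)$. *)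

From mathcomp Require Import all_boot all_order.
Set Implicit Arguments. Unset Strict Implicit. Unset Printing Implicit Defensive.

(* An ordered graph of order n: vertex set 'I_n = {0,..,n-1} with its natural
   order; the edge set is a set of ordered pairs that must be symmetric and
   irreflexive (see [is_graph]). *)
Definition ograph (n : nat) := {set 'I_n * 'I_n}.

Definition is_graph n (G : ograph n) : bool :=
  [forall u, forall v, ((u, v) \in G) == ((v, u) \in G)] &&
  [forall u, (u, u) \notin G].

Definition adj n (G : ograph n) (u v : 'I_n) : bool := (u, v) \in G.

(* A property of ordered graphs: for each order n, a predicate on graphs on
   [n] (only its members satisfying [is_graph] matter). Since the vertex set
   is [n] with its natural order, closure under order-preserving isomorphism
   is automatic. *)
Definition oprop := forall n : nat, pred (ograph n).

Definition induced m n (G : ograph n) (f : 'I_m -> 'I_n) : ograph m :=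
  [set p : 'I_m * 'I_m | (f p.1, f p.2) \in G].

Definition strictly_increasing m n (f : 'I_m -> 'I_n) : Prop :=
  forall i j : 'I_m, i < j -> f i < f j.

Definition hereditary (P : oprop) : Prop :=
  forall m n (G : ograph n) (f : 'I_m -> 'I_n),
    is_graph G -> P n G -> strictly_increasing f -> P m (induced G f).

Definition P_n (P : oprop) (n : nat) : {set ograph n} :=
  [set G : ograph n | is_graph G && P n G].

(* Sequences indexed by i = 0 .. 2k-1 (x_{i+1} in the paper is x i here). *)
Definition incr_upto n (len : nat) (x : nat -> 'I_n) : Prop :=
  forall i j, i < j -> j < len -> x i < x j.

Definition decr_upto n (len : nat) (x : nat -> 'I_n) : Prop :=
  forall i j, i < j -> j < len -> x j < x i.

Definition kstruct1 n (G : ograph n) (k : nat) : Prop :=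
  exists (y : 'I_n) (x : nat -> 'I_n),
    incr_upto (2 * k) x /\
    (y < x 0 \/ x (2 * k).-1 < y) /\
    (forall i, i.+1 < 2 * k -> adj G y (x i) = ~~ adj G y (x i.+1)).

Definition kstruct2a n (G : ograph n) (k : nat) : Prop :=
  exists (x y : nat -> 'I_n),
    incr_upto (2 * k) x /\ incr_upto (2 * k) y /\
    x (2 * k).-1 < y 0 /\
    (forall i, i.+1 < 2 * k -> adj G (x i) (y i) = ~~ adj G (x i.+1) (y i.+1)).

Definition kstruct2b n (G : ograph n) (k : nat) : Prop :=
  exists (x y : nat -> 'I_n),
    incr_upto (2 * k) x /\ decr_upto (2 * k) y /\
    x (2 * k).-1 < y (2 * k).-1 /\
    (forall i, i.+1 < 2 * k -> adj G (x i) (y i) = ~~ adj G (x i.+1) (y i.+1)).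

Definition kstruct2 n (G : ograph n) (k : nat) : Prop :=
  kstruct2a G k \/ kstruct2b G k.

From mathcomp Require Import all_boot all_order zify.
Set Implicit Arguments. Unset Strict Implicit. Unset Printing Implicit Defensive.

(* Every instance of the hypothesis yields, inside one graph G of P, 2^n
   configurations of n+1 vertices with pairwise different induced ordered
   graphs, which are members of P_(n+1) by heredity.  From a Type 1 structure
   with k >= n: keep y and, from each pair x_(2j), x_(2j+1), the vertex whose
   adjacency to y is the j-th bit.  From a Type 2 structure: Ramsey's theorem
   for pairs of blocks {x_(2s), x_(2s+1), y_(2s), y_(2s+1)} gives many blocks
   between which all adjacencies depend only on the order of the blocks and
   the parities.  Then either x_s y_t depends on whether s < t, and choosing
   x_r or y_r at every position r encodes words; or x_s y_t is constant off
   the diagonal and different on it, and the monotone partial matchings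
   between an initial segment of x's and a final segment of y's encode words;
   or else some vertex of the blocks sees an alternating sequence, i.e. a
   Type 1 structure. *)

Lemma adj_sym N (G : ograph N) u v : is_graph G -> adj G u v = adj G v u.
Proof. by case/andP=> /forallP/(_ u)/forallP/(_ v)/eqP. Qed.

Lemma induced_is_graph m N (G : ograph N) (f : 'I_m -> 'I_N) :
  is_graph G -> is_graph (induced G f).
Proof.
case/andP=> /forallP G_sym /forallP G_irr; apply/andP; split.
  by apply/forallP=> u; apply/forallP=> w; rewrite !inE; apply: (forallP (G_sym _)).
by apply/forallP=> u; rewrite inE; apply: G_irr.
Qed.

Lemma induced_in_P_n (P : oprop) m N (G : ograph N) (f : 'I_m -> 'I_N) :
  hereditary P -> G \in P_n P N -> strictly_increasing f -> induced G f \in P_n P m.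
Proof.
move=> P_her; rewrite !inE => /andP[G_graph G_P] f_incr.
by rewrite induced_is_graph //; apply: P_her.
Qed.

Section PrefixCount.
Variable p : pred nat.

Lemma count_iota0S r : count p (iota 0 r.+1) = count p (iota 0 r) + p r.
Proof. by rewrite -addn1 iotaD count_cat /= addn0. Qed.

Lemma leq_count_iota0 r r' : r <= r' -> count p (iota 0 r) <= count p (iota 0 r').
Proof. by move=> le_rr'; rewrite -(subnKC le_rr') iotaD count_cat leq_addr. Qed.

Lemma count_iota0_ub r : count p (iota 0 r) <= r.
Proof. by rewrite -{2}(size_iota 0 r) count_size. Qed.

Lemma count_iota0_predC r : count (predC p) (iota 0 r) = r - count p (iota 0 r).
Proof. by have := count_predC p (iota 0 r); rewrite size_iota; lia. Qed.

Lemma eq_count_iota0 q r : {in gtn r, p =1 q} -> count p (iota 0 r) = count q (iota 0 r).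
Proof. by move=> pq; apply: eq_in_count => j; rewrite mem_iota => /andP[_ /pq]. Qed.

Lemma count_iota0_ltn r m : r <= m ->
  count (fun j => p j && (j < r)) (iota 0 m) = count p (iota 0 r).
Proof.
move=> le_rm; rewrite -(subnKC le_rm) iotaD count_cat add0n.
rewrite (eq_in_count (a2 := p) (s := iota 0 r)) => [|j]; last first.
  by rewrite mem_iota add0n => /andP[_ ->]; rewrite andbT.
rewrite (eq_in_count (a2 := pred0) (s := iota r _)) ?count_pred0 ?addn0 // => j.
by rewrite mem_iota => /andP[le_rj _]; rewrite ltnNge le_rj andbF.
Qed.

Lemma count_iota0_geq r m : r <= m ->
  count (fun j => p j && (r <= j)) (iota 0 m) = count p (iota 0 m) - count p (iota 0 r).
Proof.
move=> le_rm; rewrite -(subnKC le_rm) iotaD !count_cat add0n.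
rewrite (eq_in_count (a2 := pred0) (s := iota 0 r)) => [|j]; last first.
  by rewrite mem_iota add0n => /andP[_ lt_jr]; rewrite leqNgt lt_jr andbF.
rewrite (eq_in_count (a2 := p) (s := iota (0 + r) _)) => [|j]; last first.
  by rewrite mem_iota add0n => /andP[-> _]; rewrite andbT.
by rewrite count_pred0 add0n addKn.
Qed.

Lemma count_iota0_witness m i : i < count p (iota 0 m) ->
  exists r, [/\ r < m, p r & count p (iota 0 r) = i].
Proof.
elim: m => [//|m IHm]; rewrite count_iota0S.
case: (ltnP i (count p (iota 0 m))) => [/IHm [r [lt_rm pr <-]] _|le_cnt_i].
  by exists r; split => //; apply: ltnW.
by case pm: (p m) => [|]; [exists m; split => //|]; lia.
Qed.

Lemma count_iota0_downclosed m :
  (forall j j', j <= j' -> p j' -> p j) ->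
  {in gtn m, forall j, (j < count p (iota 0 m)) = p j}.
Proof.
move=> p_down; elim: m => [//|m IHm] j; rewrite [_ \in _]ltnS count_iota0S => le_jm.
case pm: (p m).
  have -> : count p (iota 0 m) = m.
    rewrite -[RHS](size_iota 0 m) -count_predT; apply: eq_count_iota0 => j' lt_j'm.
    exact: p_down (ltnW lt_j'm) pm.
  by rewrite addn1 ltnS le_jm (p_down _ _ le_jm pm).
rewrite addn0; case: (ltngtP j m) le_jm => // [lt_jm _|-> _]; first exact: IHm.
by rewrite pm ltnNge count_iota0_ub.
Qed.

Lemma count_iota0_eqF r r' j : r <= j < r' ->
  count p (iota 0 r) = count p (iota 0 r') -> p j = false.
Proof.
case/andP=> le_rj lt_jr' eq_cnt; have := leq_count_iota0 le_rj.
have := leq_count_iota0 lt_jr'; rewrite count_iota0S -eq_cnt; case: (p j); lia.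
Qed.

End PrefixCount.

Lemma index_sorted_ltn (s : seq nat) x :
  sorted ltn s -> x \in s -> index x s = count (gtn x) s.
Proof.
elim: s => [//|y s IHs] /= s_path.
have s_sorted : sorted ltn s := path_sorted s_path.
have y_min := order_path_min ltn_trans s_path.
rewrite in_cons eq_sym; case: eqP => [<- _|_ /= x_s] /=.
  rewrite ltnn add0n; apply/esym/eqP; rewrite -leqn0 leqNgt -has_count.
  by apply/hasPn => z /(allP y_min) /= lt_xz; rewrite /= ltnNge ltnW.
by rewrite IHs // (allP y_min x x_s).
Qed.

Section SortedEmbedding.
Variables (N n : nat) (v : nat -> 'I_N).

Definition pos_rank i := count (fun j => v j < v i) (iota 0 n.+1).

Definition sorted_image := sort leq [seq val (v j) | j <- iota 0 n.+1].

(* The default [v 0] of [insubd] is never used: see [sorted_image_bound]. *)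
Definition sorted_embedding (i : 'I_n.+1) : 'I_N := insubd (v 0) (nth 0 sorted_image i).

Hypothesis v_inj : {in gtn n.+1 &, injective v}.

Lemma size_sorted_image : size sorted_image = n.+1.
Proof. by rewrite size_sort size_map size_iota. Qed.

Lemma mem_sorted_image i : i < n.+1 -> val (v i) \in sorted_image.
Proof. by move=> lt_in; rewrite mem_sort (map_f (fun j => val (v j))) // mem_iota. Qed.

Lemma sorted_image_ltn : sorted ltn sorted_image.
Proof.
rewrite ltn_sorted_uniq_leq sort_uniq sort_sorted ?andbT; last exact: leq_total.
rewrite map_inj_in_uniq ?iota_uniq // => i j; rewrite !mem_iota !add0n.
by move=> lt_in lt_jn /val_inj; apply: v_inj.
Qed.

Lemma sorted_image_bound i : i < n.+1 -> nth 0 sorted_image i < N.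
Proof.
move=> lt_in; have : nth 0 sorted_image i \in sorted_image.
  by rewrite mem_nth // size_sorted_image.
by rewrite mem_sort => /mapP[j _ ->]; apply: ltn_ord.
Qed.

Lemma val_sorted_embedding i : val (sorted_embedding i) = nth 0 sorted_image i.
Proof. by rewrite val_insubd sorted_image_bound. Qed.

Lemma sorted_embedding_incr : strictly_increasing sorted_embedding.
Proof.
move=> i j lt_ij; rewrite !val_sorted_embedding.
by apply: (sorted_ltn_nth ltn_trans) => //; rewrite ?sorted_image_ltn ?inE ?size_sorted_image.
Qed.

Lemma index_sorted_image i : i < n.+1 -> index (val (v i)) sorted_image = pos_rank i.
Proof.
move=> lt_in; rewrite index_sorted_ltn ?sorted_image_ltn ?mem_sorted_image //.
by rewrite (permP (permEl (perm_sort _ _))) count_map.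
Qed.

Lemma pos_rank_lt i : i < n.+1 -> pos_rank i < n.+1.
Proof.
move=> lt_in; rewrite -index_sorted_image // -size_sorted_image index_mem.
exact: mem_sorted_image.
Qed.

Lemma sorted_embedding_rank i : i < n.+1 -> sorted_embedding (inord (pos_rank i)) = v i.
Proof.
move=> lt_in; apply: val_inj; rewrite val_sorted_embedding inordK ?pos_rank_lt //.
by rewrite -index_sorted_image // nth_index ?mem_sorted_image.
Qed.

End SortedEmbedding.

Definition distinct_patterns N (G : ograph N) n (v v' : nat -> 'I_N) :=
  exists i j i' j', [/\ i < n.+1, j < n.+1, i' < n.+1 & j' < n.+1] /\
    [/\ pos_rank n v i = pos_rank n v' i', pos_rank n v j = pos_rank n v' j' &
        adj G (v i) (v j) != adj G (v' i') (v' j')].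

Lemma distinct_patterns_sym N (G : ograph N) n v v' :
  distinct_patterns G n v v' -> distinct_patterns G n v' v.
Proof.
case=> i [j [i' [j' [[lt_in lt_jn lt_i'n lt_j'n] [eq_i eq_j adj_ne]]]]].
by exists i', j', i, j; split; split; rewrite // eq_sym.
Qed.

Lemma pos_rank_incr N n (v : nat -> 'I_N) i :
  (forall i j, i < j -> j < n.+1 -> v i < v j) -> i < n.+1 -> pos_rank n v i = i.
Proof.
move=> v_incr lt_in; rewrite /pos_rank -[RHS](size_iota 0 i) -count_predT.
rewrite -(count_iota0_ltn predT (ltnW lt_in)); apply: eq_count_iota0 => j lt_jn /=.
case: (ltngtP j i) => [lt_ji|lt_ij|->]; rewrite ?ltnn //; first exact: v_incr.
by apply/negbTE; rewrite -leqNgt ltnW // v_incr.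
Qed.

Lemma incr_distinct_patterns N (G : ograph N) n (v v' : nat -> 'I_N) i j :
  (forall i j, i < j -> j < n.+1 -> v i < v j) -> (forall i j, i < j -> j < n.+1 -> v' i < v' j) ->
  i < n.+1 -> j < n.+1 -> adj G (v i) (v j) != adj G (v' i) (v' j) ->
  distinct_patterns G n v v'.
Proof. by move=> v_incr v'_incr lt_in lt_jn ne_adj; exists i, j, i, j; rewrite !pos_rank_incr. Qed.

Lemma pos_rank_same_order N n (v v' : nat -> 'I_N) i :
  {in gtn n.+1 &, forall i j, (v i < v j) = (v' i < v' j)} ->
  i < n.+1 -> pos_rank n v i = pos_rank n v' i.
Proof. by move=> same lt_in; apply: eq_count_iota0 => j lt_jn; apply: same. Qed.

Theorem leq_card_P_n (P : oprop) N (G : ograph N) n (T : finType) (v : T -> nat -> 'I_N) :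
  hereditary P -> G \in P_n P N -> (forall t, {in gtn n.+1 &, injective (v t)}) ->
  (forall t t', t != t' -> distinct_patterns G n (v t) (v t')) ->
  #|T| <= #|P_n P n.+1|.
Proof.
move=> P_her G_P v_inj v_distinct.
pose pattern t := induced G (@sorted_embedding _ n (v t)).
have adj_pattern t i j : i < n.+1 -> j < n.+1 ->
    ((inord (pos_rank n (v t) i), inord (pos_rank n (v t) j)) \in pattern t) =
      adj G (v t i) (v t j).
  by move=> lt_in lt_jn; rewrite inE /= !sorted_embedding_rank.
have pattern_inj : injective pattern.
  move=> t t' eq_tt'; apply/eqP/negPn/negP => /v_distinct.
  case=> i [j [i' [j' [[lt_in lt_jn lt_i'n lt_j'n] [eq_i eq_j]]]]].
  by rewrite -adj_pattern // -adj_pattern // eq_tt' eq_i eq_j eqxx.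
rewrite -(card_imset predT pattern_inj); apply/subset_leq_card/subsetP => _ /imsetP[t _ ->].
exact/induced_in_P_n/sorted_embedding_incr.
Qed.

Lemma alternating_parity (f : nat -> bool) m :
  (forall i, i.+1 < m -> f i = ~~ f i.+1) -> forall i, i < m -> f i = f 0 (+) odd i.
Proof.
move=> f_alt; elim=> [|i IHi] lt_im; first by rewrite addbF.
by rewrite /= addbN -IHi ?(ltnW lt_im) // (f_alt _ lt_im) negbK.
Qed.

Lemma ltn_double_add a b (e e' : bool) : a != b -> (a.*2 + e < b.*2 + e') = (a < b).
Proof.
move=> ne_ab; case: (ltngtP a b) => [lt_ab|lt_ba|eq_ab]; last by rewrite eq_ab eqxx in ne_ab.
  by apply/idP; case: e; case: e'; lia.
by apply/negbTE; case: e; case: e'; lia.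
Qed.

Lemma odd_double_add a (e : bool) : odd (a.*2 + e) = e.
Proof. by rewrite oddD odd_double; case: e. Qed.

Definition nbit n (t : {ffun 'I_n -> bool}) j : bool :=
  if insub j is Some o then t o else false.

Lemma neq_nbit n (t t' : {ffun 'I_n -> bool}) : t != t' -> exists2 j, j < n & nbit t j != nbit t' j.
Proof.
case: (boolP [forall o, t o == t' o]) => [/forallP eq_tt' /eqP[]|].
  by apply/ffunP => o; apply/eqP.
by rewrite negb_forall => /existsP[o ne_o] _; exists o; rewrite // /nbit valK.
Qed.

Lemma card_bool_ffun n : #|{ffun 'I_n -> bool}| = 2 ^ n.
Proof. by rewrite card_ffun card_bool card_ord. Qed.

Lemma incr_upto_leq N len (x : nat -> 'I_N) i j :
  incr_upto len x -> i <= j -> j < len -> x i <= x j.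
Proof. by move=> x_incr; rewrite leq_eqVlt => /orP[/eqP->|lt_ij] lt_jl //; apply/ltnW/x_incr. Qed.

Lemma incr_upto_ltn N len (x : nat -> 'I_N) i j : incr_upto len x -> i < len -> j < len ->
  (x i < x j) = (i < j).
Proof.
move=> x_incr lt_il lt_jl; case: (ltngtP i j) => [lt_ij|lt_ji|->]; rewrite ?ltnn //.
  exact: x_incr.
by apply/negbTE; rewrite -leqNgt ltnW // x_incr.
Qed.

Lemma incr_upto_inj N len (x : nat -> 'I_N) : incr_upto len x -> {in gtn len &, injective x}.
Proof.
move=> x_incr i j lt_il lt_jl eq_ij; have := incr_upto_ltn x_incr lt_il lt_jl.
have := incr_upto_ltn x_incr lt_jl lt_il; rewrite eq_ij ltnn; case: ltngtP => //.
Qed.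

Lemma decr_upto_leq N len (x : nat -> 'I_N) i j :
  decr_upto len x -> i <= j -> j < len -> x j <= x i.
Proof. by move=> x_decr; rewrite leq_eqVlt => /orP[/eqP->|lt_ij] lt_jl //; apply/ltnW/x_decr. Qed.

Section Type1.
Variables (P : oprop) (N : nat) (G : ograph N) (k n : nat) (y : 'I_N) (x : nat -> 'I_N).
Hypotheses (P_her : hereditary P) (G_P : G \in P_n P N) (le_nk : n <= k).
Hypotheses (x_incr : incr_upto (2 * k) x) (y_out : y < x 0 \/ x (2 * k).-1 < y).
Hypothesis x_alt : forall i, i.+1 < 2 * k -> adj G y (x i) = ~~ adj G y (x i.+1).

Let y_below := y < x 0.

Lemma ltn_y_x i : i < 2 * k -> y < x i = y_below.
Proof.
move=> lt_ik; rewrite /y_below; case: y_out => [lt_y0|lt_xy].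
  by rewrite lt_y0 (leq_trans lt_y0) ?(incr_upto_leq x_incr).
have y_ltn_xF j : j < 2 * k -> (y < x j) = false.
  move=> lt_jk; apply/negbTE; rewrite -leqNgt ltnW // (leq_ltn_trans _ lt_xy) //.
  by apply: (incr_upto_leq x_incr); lia.
by rewrite !y_ltn_xF //; lia.
Qed.

Lemma ltn_x_y i : i < 2 * k -> x i < y = ~~ y_below.
Proof.
move=> lt_ik; rewrite -(ltn_y_x lt_ik) ltnNge leq_eqVlt.
suff -> : (y == x i :> nat) = false by [].
case: y_out => [lt_y0|lt_xy]; apply/negbTE/eqP => eq_xy.
  by have := leq_trans lt_y0 (incr_upto_leq x_incr (leq0n i) lt_ik); rewrite -eq_xy ltnn.
have : x i < y by apply: leq_ltn_trans lt_xy; apply: (incr_upto_leq x_incr); lia.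
by rewrite -eq_xy ltnn.
Qed.

Let star_slot (t : {ffun 'I_n -> bool}) j := j.*2 + (nbit t j (+) adj G y (x 0)).

Definition star_config t i := if i is j.+1 then x (star_slot t j) else y.

Lemma star_slot_bound t j : j < n -> star_slot t j < 2 * k.
Proof. by rewrite /star_slot; case: (_ (+) _); lia. Qed.

Lemma star_config_ltn t i j : i < n.+1 -> j < n.+1 ->
  (star_config t i < star_config t j) =
    match i, j with
    | 0, 0 => false | 0, _.+1 => y_below | _.+1, 0 => ~~ y_below | i'.+1, j'.+1 => i' < j'
    end.
Proof.
case: i => [|i]; case: j => [|j] //= lt_in lt_jn;
  rewrite ?ltnn ?ltn_y_x ?ltn_x_y ?star_slot_bound //.
rewrite (incr_upto_ltn x_incr) ?star_slot_bound //.
case: (eqVneq i j) => [->|ne_ij]; first by rewrite !ltnn.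
exact: ltn_double_add.
Qed.

Lemma star_config_inj t : {in gtn n.+1 &, injective (star_config t)}.
Proof.
move=> i j lt_in lt_jn eq_ij.
have := star_config_ltn t lt_in lt_jn; have := star_config_ltn t lt_jn lt_in.
rewrite eq_ij ltnn; case: i j {eq_ij} lt_in lt_jn => [|i] [|j] //= _ _.
- by case: y_below.
- by case: y_below.
- by case: (ltngtP i j) => // ->.
Qed.

Lemma adj_star_config t j : j < n -> adj G y (star_config t j.+1) = nbit t j.
Proof.
move=> lt_jn; rewrite /= (alternating_parity x_alt) ?star_slot_bound //.
by rewrite /star_slot odd_double_add addbC -addbA addbb addbF.
Qed.

Lemma type1_card : 2 ^ n <= #|P_n P n.+1|.
Proof.
rewrite -card_bool_ffun; apply: (leq_card_P_n (v := star_config) P_her G_P star_config_inj).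
move=> t t' /neq_nbit[j lt_jn ne_j]; exists 0, j.+1, 0, j.+1.
have same_rank i : i < n.+1 -> pos_rank n (star_config t) i = pos_rank n (star_config t') i.
  by move=> lt_in; apply: pos_rank_same_order => // a b lt_an lt_bn; rewrite !star_config_ltn.
by split; split; rewrite ?same_rank ?adj_star_config.
Qed.

End Type1.

Section Ramsey.
Variable C : finType.

Lemma size_sum_count (f : nat -> C) (s : seq nat) :
  size s = \sum_(c : C) count (fun u => f u == c) s.
Proof.
elim: s => [|u s IHs] /=; first by rewrite big1.
rewrite big_split /= -IHs (bigD1 (f u)) //= eqxx big1 ?addn0 // => c.
by rewrite eq_sym => /negbTE->.
Qed.

Lemma pigeonhole_count (f : nat -> C) (s : seq nat) m :
  0 < #|C| -> #|C| * m <= size s -> exists c, m <= count (fun u => f u == c) s.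
Proof.
move=> C_gt0 le_s; case: (boolP [exists c, m <= count (fun u => f u == c) s]) => [/existsP//|].
rewrite negb_exists => /forallP small; case: m le_s small => [_ _|m le_s small].
  by case/card_gt0P: C_gt0 => c _; exists c.
suff : size s <= #|C| * m by rewrite mulnS in le_s; lia.
rewrite (size_sum_count f) -sum_nat_const; apply: leq_sum => c _.
by rewrite -ltnS ltnNge small.
Qed.

Fixpoint ramsey_bound r := if r is r'.+1 then #|C| * ramsey_bound r' + 1 else 0.

Variable colour : nat -> nat -> C.

Lemma end_homogeneous r (S : seq nat) : 0 < #|C| -> sorted ltn S -> ramsey_bound r <= size S ->
  exists (v : nat -> nat) (kappa : nat -> C),
    [/\ forall i, i < r -> v i \in S,
        forall i j, i < j -> j < r -> v i < v j &
        forall i j, i < j -> j < r -> colour (v i) (v j) = kappa i].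
Proof.
move=> C_gt0; elim: r S => [|r IHr] [|u S] S_sorted //=; rewrite ?addn1 // => le_S.
- by exists (fun=> 0), (fun=> colour 0 0).
- by exists (fun=> 0), (fun=> colour 0 0).
have [c le_c] := pigeonhole_count (colour u) C_gt0 (le_S : _ <= size S).
have u_min := order_path_min ltn_trans S_sorted.
have S'_sorted : sorted ltn [seq w <- S | colour u w == c].
  exact/sorted_filter/(path_sorted S_sorted)/ltn_trans.
have [|v [kappa [v_S v_incr v_col]]] := IHr _ S'_sorted; first by rewrite size_filter.
exists (fun i => if i is i'.+1 then v i' else u), (fun i => if i is i'.+1 then kappa i' else c).
split=> [[|i] lt_ir|[|i] [|j] // lt_ij lt_jr|[|i] [|j] // lt_ij lt_jr].
- by rewrite inE eqxx.
- by have := v_S _ lt_ir; rewrite inE mem_filter => /andP[_ ->]; rewrite orbT.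
- by have := v_S _ lt_jr; rewrite mem_filter => /andP[_ /(allP u_min)].
- exact: v_incr.
- by have := v_S _ lt_jr; rewrite mem_filter => /andP[/eqP].
- exact: v_col.
Qed.

Lemma ramsey_pairs m : 0 < #|C| -> exists (b : nat -> nat) (kappa : C),
  [/\ forall i j, i < j -> j < m -> b i < b j,
      forall i, i < m -> b i < ramsey_bound (#|C| * m) &
      forall i j, i < j -> j < m -> colour (b i) (b j) = kappa].
Proof.
move=> C_gt0; set r := #|C| * m.
have [|v [kappa [v_S v_incr v_col]]] :=
  end_homogeneous (r := r) C_gt0 (iota_ltn_sorted 0 (ramsey_bound r)); first by rewrite size_iota.
have [c le_c] : exists c, m <= count (fun i => kappa i == c) (iota 0 r).
  by apply: pigeonhole_count; rewrite ?size_iota.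
set I := [seq i <- iota 0 r | kappa i == c].
have I_sorted : sorted ltn I by apply: sorted_filter (iota_ltn_sorted 0 r); apply: ltn_trans.
have nth_I i : i < size I -> nth 0 I i < r /\ kappa (nth 0 I i) = c.
  move=> lt_iI; have := mem_nth 0 lt_iI; rewrite mem_filter mem_iota.
  by case/andP=> /eqP-> /andP[_ ->].
have lt_nth_I i j : i < j -> j < m -> nth 0 I i < nth 0 I j.
  move=> lt_ij lt_jm; apply: (sorted_ltn_nth ltn_trans) => //; rewrite inE.
    by apply: ltn_trans lt_ij _; apply: leq_trans lt_jm _; rewrite size_filter.
  by apply: leq_trans lt_jm _; rewrite size_filter.
have lt_m_I i : i < m -> i < size I by move=> lt_im; apply: leq_trans lt_im _; rewrite size_filter.
exists (fun i => v (nth 0 I i)), c; split=> [i j lt_ij lt_jm|i lt_im|i j lt_ij lt_jm].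
- by apply: v_incr (lt_nth_I _ _ lt_ij lt_jm) _; case: (nth_I j (lt_m_I j lt_jm)).
- by have := v_S _ (proj1 (nth_I i (lt_m_I i lt_im))); rewrite mem_iota.
- rewrite v_col ?lt_nth_I //; first by case: (nth_I i (lt_m_I i (ltn_trans lt_ij lt_jm))).
  by case: (nth_I j (lt_m_I j lt_jm)).
Qed.

End Ramsey.

Lemma count_or_andN (p q : pred nat) s :
  count (fun j => p j || (~~ p j && q j)) s = count p s + count (fun j => ~~ p j && q j) s.
Proof. by elim: s => //= j s ->; case: (p j); case: (q j) => /=; lia. Qed.

Lemma ltn_same_count_iota0 (p q : pred nat) r r' : {in gtn r, p =1 q} -> q r' ->
  count q (iota 0 r') = count p (iota 0 r) -> r' != r -> r < r'.
Proof.
move=> pq qr' eq_cnt ne_r'r; rewrite ltn_neqAle eq_sym ne_r'r leqNgt /=; apply/negP => lt_r'r.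
have := leq_count_iota0 p lt_r'r; rewrite count_iota0S pq // qr' -eq_cnt.
rewrite (@eq_count_iota0 p q) => [|j lt_jr']; first lia.
by apply: pq; apply: ltn_trans lt_r'r.
Qed.

Lemma first_difference (f g : nat -> bool) m : (exists2 r, r < m & f r != g r) ->
  exists r, [/\ r < m, f r != g r & {in gtn r, f =1 g}].
Proof.
case=> r0 lt_r0m ne_r0; have ex_r : exists r, f r != g r by exists r0.
case: (ex_minnP ex_r) => r ne_r r_min; exists r; split=> // [|i lt_ir].
  exact: leq_ltn_trans (r_min _ ne_r0) lt_r0m.
by apply/eqP; apply: contraTT lt_ir => /r_min; rewrite -leqNgt.
Qed.

Section TwoChains.
Variables (P : oprop) (N : nat) (G : ograph N) (X Y : nat -> 'I_N) (L : nat) (up : bool).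
Hypotheses (P_her : hereditary P) (G_P : G \in P_n P N).
Hypothesis X_incr : incr_upto L X.
Hypothesis Y_mono : forall s t, s < t -> t < L -> if up then Y s < Y t else Y t < Y s.
Hypothesis X_below_Y : forall s t, s < L -> t < L -> X s < Y t.

Lemma ltn_Y s t : s < L -> t < L -> (Y s < Y t) = if up then s < t else t < s.
Proof.
move=> lt_sL lt_tL; case: (ltngtP s t) => [lt_st|lt_ts|->]; last by rewrite ltnn; case: up.
  by have := Y_mono lt_st lt_tL; case: up => // lt_Y; apply/negbTE; rewrite -leqNgt ltnW.
by have := Y_mono lt_ts lt_sL; case: up => // lt_Y; apply/negbTE; rewrite -leqNgt ltnW.
Qed.

Lemma Y_inj : {in gtn L &, injective Y}.
Proof.
move=> s t lt_sL lt_tL eq_st; have := ltn_Y lt_sL lt_tL; have := ltn_Y lt_tL lt_sL.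
by rewrite eq_st ltnn; case: up; case: ltngtP.
Qed.

Lemma X_neq_Y s t : s < L -> t < L -> X s != Y t.
Proof.
by move=> lt_sL lt_tL; apply/eqP => eq_XY; have := X_below_Y lt_sL lt_tL; rewrite eq_XY ltnn.
Qed.

Variable al : bool.
Hypothesis adj_XX : forall s t, s < L -> t < L -> s != t -> adj G (X s) (X t) = al.

Section Crossing.
Variables (c1 c2 : bool) (n : nat).
Hypothesis c1_neq_c2 : c1 != c2.
Hypothesis adj_XY : forall s t, s < L -> t < L -> s != t ->
  adj G (X s) (Y t) = if s < t then c1 else c2.
Hypothesis lt_nL : n < L.

(* The word of [t] forces an [X] at the first position when [al = c2] and at
   the last one when [al = c1]; this [X] tells apart words with different
   numbers of [X]s. *)
Variable first : bool.
Hypothesis al_first : al = if first then c2 else c1.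

Definition cross_word (t : {ffun 'I_n -> bool}) r :=
  if first then (if r is r'.+1 then nbit t r' else true) else (r == n) || nbit t r.

Definition cross_config t r := if cross_word t r then X r else Y r.

Definition nX t := count (cross_word t) (iota 0 n.+1).
Definition nY t := count (predC (cross_word t)) (iota 0 n.+1).

Lemma ltL r : r < n.+1 -> r < L.
Proof. by move=> lt_rn; apply: leq_trans lt_nL. Qed.

Lemma nX_add_nY t : nX t + nY t = n.+1.
Proof. by rewrite /nX /nY count_predC size_iota. Qed.

Lemma cross_config_inj t : {in gtn n.+1 &, injective (cross_config t)}.
Proof.
move=> i j /ltL lt_iL /ltL lt_jL; rewrite /cross_config.
case: (cross_word t i); case: (cross_word t j) => eq_ij.
- exact: (incr_upto_inj X_incr).
- by have := X_neq_Y lt_iL lt_jL; rewrite eq_ij eqxx.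
- by have := X_neq_Y lt_jL lt_iL; rewrite eq_ij eqxx.
- exact: Y_inj.
Qed.

Lemma rank_X t r : r < n.+1 -> cross_word t r ->
  pos_rank n (cross_config t) r = count (cross_word t) (iota 0 r).
Proof.
move=> lt_rn w_r; rewrite /pos_rank -(count_iota0_ltn _ (ltnW lt_rn)).
apply: eq_count_iota0 => j lt_jn; rewrite /cross_config w_r.
case: (cross_word t j) => /=; first by rewrite (incr_upto_ltn X_incr) ?ltL.
by apply/negbTE; rewrite -leqNgt ltnW // X_below_Y ?ltL.
Qed.

Lemma rank_Y t r : r < n.+1 -> ~~ cross_word t r ->
  pos_rank n (cross_config t) r = nX t + (if up then count (predC (cross_word t)) (iota 0 r)
                                        else nY t - count (predC (cross_word t)) (iota 0 r.+1)).
Proof.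
move=> lt_rn w_r; rewrite /pos_rank.
rewrite (@eq_count_iota0 _ (fun j => cross_word t j ||
            (~~ cross_word t j && (if up then j < r else r < j)))) => [|j lt_jn].
  rewrite count_or_andN; congr (_ + _).
  by case: up; [apply: count_iota0_ltn; apply: ltnW | apply: count_iota0_geq].
rewrite /cross_config (negbTE w_r).
by case: (cross_word t j) => /=; rewrite ?X_below_Y ?ltn_Y ?ltL.
Qed.

Lemma cross_word_pivot t : cross_word t (if first then 0 else n).
Proof. by rewrite /cross_word; case: first; rewrite ?eqxx. Qed.

Lemma nX_gt0 t : 0 < nX t.
Proof.
rewrite /nX -has_count; apply/hasP; exists (if first then 0 else n).
  by rewrite mem_iota; case: first; lia.
exact: cross_word_pivot.
Qed.

Lemma exists_X_of_rank t i : i < nX t ->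
  exists r, [/\ r < n.+1, cross_word t r & pos_rank n (cross_config t) r = i].
Proof.
case/count_iota0_witness=> r [lt_rn w_r cnt_r].
by exists r; split; rewrite // rank_X.
Qed.

Lemma exists_first_Y t t' : nX t < nX t' ->
  exists r, [/\ r < n.+1, ~~ cross_word t r & pos_rank n (cross_config t) r = nX t].
Proof.
move=> lt_nX; have nY_gt0 : 0 < nY t.
  by have := nX_add_nY t; have := count_iota0_ub (cross_word t') n.+1; rewrite -/(nX t'); lia.
have [|r [lt_rn w_r cnt_r]] :=
  @count_iota0_witness (predC (cross_word t)) n.+1 (if up then 0 else (nY t).-1).
  by rewrite -/(nY t); case: up; lia.
exists r; split; rewrite // rank_Y //; case: up cnt_r => cnt_r; first by rewrite cnt_r addn0.
have := leq_count_iota0 (predC (cross_word t)) lt_rn.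
by rewrite count_iota0S cnt_r w_r -/(nY t); lia.
Qed.

Lemma cross_word_nbit t j : j < n -> cross_word t (if first then j.+1 else j) = nbit t j.
Proof. by move=> lt_jn; rewrite /cross_word; case: first; rewrite ?(ltn_eqF lt_jn). Qed.

Lemma cross_distinct_first t t' : first -> nX t < nX t' ->
  distinct_patterns G n (cross_config t) (cross_config t').
Proof.
move=> fst lt_nX; have w0 u : cross_word u 0 by have := cross_word_pivot u; rewrite fst.
have [r0 [lt_r0n w_r0 rk_r0]] := exists_first_Y lt_nX.
have [r1 [lt_r1n w_r1 rk_r1]] := exists_X_of_rank lt_nX.
have ne_r1 : r1 != 0.
  by apply/eqP=> r1_0; move: rk_r1; rewrite r1_0 rank_X //=; have := nX_gt0 t; lia.
have ne_r0 : r0 != 0 by apply: contraNneq w_r0 => ->.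
exists 0, r0, 0, r1; split; split => //.
- by rewrite !rank_X.
- by rewrite rk_r0 rk_r1.
rewrite /cross_config !w0 (negbTE w_r0) w_r1 adj_XY ?adj_XX ?ltL 1?eq_sym //.
by rewrite lt0n ne_r0 al_first fst eq_sym.
Qed.

Lemma cross_distinct_last t t' : ~~ first -> nX t < nX t' ->
  distinct_patterns G n (cross_config t) (cross_config t').
Proof.
move=> lst lt_nX; have wn u : cross_word u n by have := cross_word_pivot u; rewrite (negbTE lst).
have [r0 [lt_r0n w_r0 rk_r0]] := exists_first_Y lt_nX.
have [|r1 [lt_r1n w_r1 rk_r1]] := @exists_X_of_rank t' (nX t).-1; first lia.
have [r2 [lt_r2n w_r2 rk_r2]] := exists_X_of_rank lt_nX.
have lt_r0n' : r0 < n by rewrite ltn_neqAle -ltnS lt_r0n andbT; apply: contraNneq w_r0 => ->.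
have ne_r12 : r1 != r2.
  by apply/eqP=> eq_r12; move: rk_r1; rewrite eq_r12 rk_r2; have := nX_gt0 t; lia.
exists n, r0, r1, r2; split; split => //.
- by rewrite rk_r1 rank_X // /nX count_iota0S wn addn1.
- by rewrite rk_r0 rk_r2.
rewrite /cross_config wn (negbTE w_r0) w_r1 w_r2 adj_XY ?adj_XX ?ltL //; last first.
  by rewrite neq_ltn lt_r0n' orbT.
by rewrite ltnNge (ltnW lt_r0n') al_first (negbTE lst) eq_sym.
Qed.

Lemma cross_distinct_same_nX t t' r : nX t = nX t' -> r < n.+1 ->
  cross_word t r -> ~~ cross_word t' r -> {in gtn r, cross_word t =1 cross_word t'} ->
  distinct_patterns G n (cross_config t) (cross_config t').
Proof.
move=> eq_nX lt_rn w_r w'_r eq_below.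
have eq_nY : nY t = nY t' by have := nX_add_nY t; have := nX_add_nY t'; lia.
have [|r1 [lt_r1n w_r1 cnt_r1]] :=
  @count_iota0_witness (cross_word t') n.+1 (count (cross_word t) (iota 0 r)).
  rewrite -/(nX t') -eq_nX; apply: leq_trans (leq_count_iota0 _ lt_rn).
  by rewrite count_iota0S w_r addn1.
have lt_rr1 : r < r1.
  apply: (ltn_same_count_iota0 eq_below) => //; by apply: contraNneq w'_r => <-.
have [|r2 [lt_r2n w_r2 cnt_r2]] :=
  @count_iota0_witness (predC (cross_word t)) n.+1 (count (predC (cross_word t')) (iota 0 r)).
  rewrite -/(nY t) eq_nY; apply: leq_trans (leq_count_iota0 _ lt_rn).
  by rewrite count_iota0S /= w'_r addn1.
have lt_rr2 : r < r2.
  apply: (@ltn_same_count_iota0 (predC (cross_word t')) (predC (cross_word t))) => //.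
    by move=> j lt_jr /=; rewrite eq_below.
  by apply: contraNneq w_r2 => ->.
exists r, r2, r1, r; split; split => //.
- by rewrite !rank_X // cnt_r1.
- rewrite !rank_Y // -eq_nX -eq_nY !count_iota0S cnt_r2 w_r2 /= w'_r.
  by rewrite (@eq_count_iota0 _ (predC (cross_word t))) // => j lt_jr /=; rewrite eq_below.
- have ne_rr2 : r != r2 by rewrite neq_ltn lt_rr2.
  have ne_r1r : r1 != r by rewrite neq_ltn lt_rr1 orbT.
  rewrite /cross_config w_r (negbTE w_r2) w_r1 (negbTE w'_r) !adj_XY ?ltL //.
  by rewrite lt_rr2 ltnNge (ltnW lt_rr1).
Qed.

Lemma crossing_card : 2 ^ n <= #|P_n P n.+1|.
Proof.
rewrite -card_bool_ffun; apply: (leq_card_P_n (v := cross_config) P_her G_P cross_config_inj).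
move=> t t' ne_tt'; case: (ltngtP (nX t) (nX t')) => [lt_nX|lt_nX|eq_nX].
- by case: (boolP first) => [fst|lst]; [apply: cross_distinct_first | apply: cross_distinct_last].
- by apply: distinct_patterns_sym; case: (boolP first) => [fst|lst];
    [apply: cross_distinct_first | apply: cross_distinct_last].
have [j lt_jn ne_j] := neq_nbit ne_tt'.
have [|r [lt_rn ne_r min_r]] := @first_difference (cross_word t) (cross_word t') n.+1.
  by exists (if first then j.+1 else j); rewrite ?cross_word_nbit //; case: first; lia.
have eq_below' : {in gtn r, cross_word t' =1 cross_word t} by move=> i /min_r.
case w_r: (cross_word t r) ne_r => ne_r.
  exact: (cross_distinct_same_nX eq_nX lt_rn).
apply: distinct_patterns_sym; apply: (cross_distinct_same_nX (esym eq_nX) lt_rn) => //.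
- by move: ne_r; case: (cross_word t' r).
- by rewrite w_r.
Qed.

End Crossing.

Lemma ltn_slot (M c r c' r' : nat) : r < M -> c < c' -> M * c + r < M * c' + r'.
Proof.
move=> lt_rM lt_cc'; apply: (@leq_trans (M * c.+1)); first by rewrite mulnS addnC ltn_add2r.
by apply: leq_trans (leq_addr _ _); rewrite leq_mul2l lt_cc' orbT.
Qed.

Lemma slot_inj (M c r c' r' : nat) : r < M -> r' < M -> M * c + r = M * c' + r' -> c = c' /\ r = r'.
Proof.
move=> lt_rM lt_r'M eq_slot; case: (ltngtP c c') => [lt_cc'|lt_c'c|eq_cc'].
- by have := ltn_slot r' lt_rM lt_cc'; rewrite eq_slot ltnn.
- by have := ltn_slot r lt_r'M lt_c'c; rewrite eq_slot ltnn.
- by move: eq_slot; rewrite eq_cc' => /addnI.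
Qed.

Lemma slot_bound (M c r k : nat) : r < M -> c <= k -> M * c + r < M * k.+1.
Proof. by move=> lt_rM le_ck; rewrite mulnS addnC -addSn leq_add // leq_mul2l le_ck orbT. Qed.

Section Matching.
Variables (be c dd : bool) (n : nat).
Hypothesis adj_YY : forall s t, s < L -> t < L -> s != t -> adj G (Y s) (Y t) = be.
Hypothesis adj_XY : forall s t, s < L -> t < L -> adj G (X s) (Y t) = if s == t then dd else c.
Hypothesis dd_neq_c : dd != c.
Local Notation nn := n.+1.
Local Notation M := (2 * nn).+1.
Hypothesis le_L : M * nn.+1 <= L.

(* [match_config a U V] lists [a] vertices of [X], then [nn - a] of [Y]; the
   [i]-th element of [U] is matched with the [i]-th of [V] counted from the
   side given by [up].  Marked vertices sit at offset [0] of the block of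
   length [M] given by their count, unmarked ones at pairwise different
   offsets, so an [X] and a [Y] share their index exactly on matched pairs. *)
Definition count_upto (U : pred nat) p := count U (iota 0 p.+1).
Definition match_count (V : pred nat) q :=
  if up then count_upto V q else count V (iota 0 nn) - count V (iota 0 q).
Definition xslot (U : pred nat) p := M * count_upto U p + (if U p then 0 else p.+1).
Definition yslot (V : pred nat) q :=
  M * match_count V q + (if V q then 0 else if up then nn + q.+1 else 2 * nn - q).
Definition match_config a U V p := if p < a then X (xslot U p) else Y (yslot V p).

Definition matching a (U V : pred nat) := [/\ a <= nn, (forall p, U p -> p < a),
  (forall q, V q -> a <= q < nn) & count U (iota 0 nn) = count V (iota 0 nn)].

Lemma xoffset_lt U p : p < nn -> (if U p then 0 else p.+1) < M.
Proof. by case: (U p); lia. Qed.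

Lemma yoffset_lt V q : q < nn -> (if V q then 0 else if up then nn + q.+1 else 2 * nn - q) < M.
Proof. by case: (V q); case: up; lia. Qed.

Lemma xslot_lt U p : p < nn -> xslot U p < L.
Proof.
move=> lt_pn; apply: leq_trans le_L; apply: slot_bound; first exact: xoffset_lt.
exact: leq_trans (count_iota0_ub _ _) _.
Qed.

Lemma yslot_lt V q : q < nn -> yslot V q < L.
Proof.
move=> lt_qn; apply: leq_trans le_L; apply: slot_bound; first exact: yoffset_lt.
rewrite /match_count; case: up; first exact: leq_trans (count_iota0_ub _ _) _.
exact: leq_trans (leq_subr _ _) (count_iota0_ub _ _).
Qed.

Lemma xslot_incr U p p' : p < p' -> p' < nn -> xslot U p < xslot U p'.
Proof.
move=> lt_pp' lt_p'n; rewrite /xslot /count_upto.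
have le_cnt := leq_count_iota0 U (ltnW lt_pp' : p.+1 <= p'.+1).
case: (ltngtP (count U (iota 0 p.+1)) (count U (iota 0 p'.+1))) le_cnt => // [lt_cnt|eq_cnt] _.
  by apply: ltn_slot => //; apply: xoffset_lt; apply: ltn_trans lt_p'n.
have Up' : U p' = false by apply: (count_iota0_eqF _ eq_cnt); rewrite lt_pp' ltnSn.
by rewrite eq_cnt Up' ltn_add2l; case: (U p).
Qed.

Lemma yslot_mono V q q' : q < q' -> q' < nn ->
  if up then yslot V q < yslot V q' else yslot V q' < yslot V q.
Proof.
move=> lt_qq' lt_q'n; have yoff q0 := yoffset_lt V (q := q0).
rewrite /yslot /match_count /count_upto; case: up yoff => yoff.
  have le_cnt := leq_count_iota0 V (ltnW lt_qq' : q.+1 <= q'.+1).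
  case: (ltngtP (count V (iota 0 q.+1)) (count V (iota 0 q'.+1))) le_cnt => // [lt_cnt|eq_cnt] _.
    by apply: ltn_slot => //; apply: yoff; apply: ltn_trans lt_q'n.
  have Vq' : V q' = false by apply: (count_iota0_eqF _ eq_cnt); rewrite lt_qq' ltnSn.
  by rewrite eq_cnt Vq' ltn_add2l; case: (V q); lia.
have le_cnt := leq_count_iota0 V (ltnW lt_qq').
have le_tot := leq_count_iota0 V (ltnW lt_q'n).
case: (ltngtP (count V (iota 0 q)) (count V (iota 0 q'))) le_cnt => [lt_cnt|lt_cnt|eq_cnt] le_cnt.
- by apply: ltn_slot; [apply: yoff | lia].
- lia.
have Vq : V q = false by apply: (count_iota0_eqF _ eq_cnt); rewrite leqnn lt_qq'.
by rewrite eq_cnt Vq ltn_add2l; case: (V q'); lia.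
Qed.

Lemma match_config_incr a U V p p' : matching a U V -> p < p' -> p' < nn ->
  match_config a U V p < match_config a U V p'.
Proof.
case=> le_an _ _ _ lt_pp' lt_p'n; have lt_pn := ltn_trans lt_pp' lt_p'n.
rewrite /match_config; case: (ltnP p' a) => [lt_p'a|le_ap'].
  by rewrite (ltn_trans lt_pp' lt_p'a) X_incr ?xslot_incr ?xslot_lt.
case: (ltnP p a) => [lt_pa|le_ap]; first by rewrite X_below_Y ?xslot_lt ?yslot_lt.
by rewrite ltn_Y ?yslot_lt // yslot_mono.
Qed.

Lemma match_config_inj a U V : matching a U V -> {in gtn nn &, injective (match_config a U V)}.
Proof.
move=> ok i j lt_in lt_jn eq_ij; case: (ltngtP i j) => // [lt_ij|lt_ji].
  by have := match_config_incr ok lt_ij lt_jn; rewrite eq_ij ltnn.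
by have := match_config_incr ok lt_ji lt_in; rewrite eq_ij ltnn.
Qed.

Lemma xslot_eq_yslot U V p q : p < nn -> q < nn ->
  (xslot U p == yslot V q) = [&& U p, V q & count_upto U p == match_count V q].
Proof.
move=> lt_pn lt_qn; apply/eqP/idP => [|/and3P[Up Vq /eqP eq_cnt]]; last first.
  by rewrite /xslot /yslot Up Vq eq_cnt.
case/slot_inj; rewrite ?xoffset_lt ?yoffset_lt // => -> eq_off; rewrite eqxx andbT.
by move: eq_off; case: (U p); case: (V q) => //=; case: up; lia.
Qed.

Lemma adj_match_XY a U V p q : matching a U V -> p < a -> a <= q -> q < nn ->
  adj G (match_config a U V p) (match_config a U V q) =
    if [&& U p, V q & count_upto U p == match_count V q] then dd else c.
Proof.
case=> le_an _ _ _ lt_pa le_aq lt_qn; have lt_pn := leq_trans lt_pa le_an.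
by rewrite /match_config lt_pa ltnNge le_aq adj_XY ?xslot_lt ?yslot_lt // xslot_eq_yslot.
Qed.

Lemma adj_match_XX a U V p p' : matching a U V -> p < a -> p' < a -> p != p' ->
  adj G (match_config a U V p) (match_config a U V p') = al.
Proof.
move=> ok lt_pa lt_p'a ne_pp'; have [le_an _ _ _] := ok.
have [lt_pn lt_p'n] := (leq_trans lt_pa le_an, leq_trans lt_p'a le_an).
rewrite /match_config lt_pa lt_p'a adj_XX ?xslot_lt //.
case: (ltngtP p p') ne_pp' => // [lt_pp'|lt_p'p] _; rewrite neq_ltn.
  by rewrite xslot_incr.
by rewrite (xslot_incr U lt_p'p) ?orbT.
Qed.

Lemma adj_match_YY a U V q q' : matching a U V -> a <= q -> a <= q' -> q < nn -> q' < nn ->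
  q != q' -> adj G (match_config a U V q) (match_config a U V q') = be.
Proof.
move=> ok le_aq le_aq' lt_qn lt_q'n ne_qq'.
rewrite /match_config ltnNge le_aq ltnNge le_aq' /= adj_YY ?yslot_lt //.
case: (ltngtP q q') ne_qq' => // [lt_qq'|lt_q'q] _; rewrite neq_ltn.
  by have := yslot_mono V lt_qq' lt_q'n; case: up => ->; rewrite ?orbT.
by have := yslot_mono V lt_q'q lt_qn; case: up => ->; rewrite ?orbT.
Qed.

Lemma matched_partner_X a U V p : matching a U V -> U p ->
  exists q, [/\ q < nn, V q & match_count V q = count_upto U p].
Proof.
case=> le_an U_a V_a eq_cnt Up; have lt_pn := leq_trans (U_a _ Up) le_an.
have cnt_gt0 : 0 < count_upto U p by rewrite /count_upto count_iota0S Up addn1.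
have le_cnt : count_upto U p <= count V (iota 0 nn) by rewrite -eq_cnt leq_count_iota0.
rewrite /match_count; case: up.
  have [|q [lt_qn Vq cnt_q]] := @count_iota0_witness V nn (count_upto U p).-1; first lia.
  by exists q; split => //; rewrite [count_upto V q]/count_upto count_iota0S cnt_q Vq; lia.
have [|q [lt_qn Vq cnt_q]] := @count_iota0_witness V nn (count V (iota 0 nn) - count_upto U p).
  lia.
by exists q; split; rewrite // cnt_q; lia.
Qed.

Lemma matched_partner_Y a U V q : matching a U V -> V q ->
  exists p, [/\ p < nn, U p & count_upto U p = match_count V q].
Proof.
case=> le_an U_a V_a eq_cnt Vq; have /andP[_ lt_qn] := V_a _ Vq.
have : 0 < match_count V q <= count U (iota 0 nn).
  have := leq_count_iota0 V lt_qn; rewrite eq_cnt /match_count /count_upto count_iota0S Vq.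
  by case: up; lia.
case/andP=> cnt_gt0 le_cnt.
have [|p [lt_pn Up cnt_p]] := @count_iota0_witness U nn (match_count V q).-1; first lia.
by exists p; split => //; rewrite [count_upto U p]/count_upto count_iota0S cnt_p Up; lia.
Qed.

Lemma matching_distinct_X a U V U' V' p : matching a U V -> matching a U' V' ->
  U p -> ~~ U' p -> distinct_patterns G n (match_config a U V) (match_config a U' V').
Proof.
move=> ok ok' Up U'p; have [le_an U_a V_a _] := ok; have lt_pa := U_a _ Up.
have [q [lt_qn Vq cnt_q]] := matched_partner_X ok Up; have /andP[le_aq _] := V_a _ Vq.
have lt_pn := leq_trans lt_pa le_an.
apply: (incr_distinct_patterns (i := p) (j := q)) => //; try by move=> *; apply: match_config_incr.
by rewrite !adj_match_XY // Up Vq cnt_q eqxx (negbTE U'p).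
Qed.

Lemma matching_distinct_Y a U V U' V' q : matching a U V -> matching a U' V' ->
  V q -> ~~ V' q -> distinct_patterns G n (match_config a U V) (match_config a U' V').
Proof.
move=> ok ok' Vq V'q; have [le_an U_a V_a _] := ok; have /andP[le_aq lt_qn] := V_a _ Vq.
have [p [lt_pn Up cnt_p]] := matched_partner_Y ok Vq; have lt_pa := U_a _ Up.
apply: (incr_distinct_patterns (i := p) (j := q)) => //; try by move=> *; apply: match_config_incr.
by rewrite !adj_match_XY // Up Vq cnt_p eqxx (negbTE V'q) andbF.
Qed.

Lemma matching_distinct_same_split a U V U' V' p : matching a U V -> matching a U' V' ->
  p < nn -> (U p != U' p) || (V p != V' p) ->
  distinct_patterns G n (match_config a U V) (match_config a U' V').
Proof.
move=> ok ok' lt_pn /orP[]; [case Up: (U p) | case Vp: (V p)] => /= ne_p.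
- exact: (matching_distinct_X ok ok' Up ne_p).
- by apply/distinct_patterns_sym/(matching_distinct_X ok' ok (negbNE ne_p)); rewrite Up.
- exact: (matching_distinct_Y ok ok' Vp ne_p).
- by apply/distinct_patterns_sym/(matching_distinct_Y ok' ok (negbNE ne_p)); rewrite Vp.
Qed.

(* For [al = dd]: the word [t] shifted by one marks the [X]s and unmarks the
   [Y]s, and the split point is its number of zeros, so that both sides carry
   the same number of marks. *)
Definition wword (t : {ffun 'I_n -> bool}) p := if p is p'.+1 then nbit t p' else false.
Definition wsplit t := nn - count (wword t) (iota 0 nn).
Definition wU t p := (p < wsplit t) && wword t p.
Definition wV t q := [&& wsplit t <= q, q < nn & ~~ wword t q].
Definition wconfig t := match_config (wsplit t) (wU t) (wV t).

Lemma count_wword_lt t : count (wword t) (iota 0 nn) < nn.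
Proof. by rewrite /= add0n ltnS -{2}(size_iota 1 n) count_size. Qed.

Lemma wsplit_gt0 t : 0 < wsplit t.
Proof. by have := count_wword_lt t; rewrite /wsplit; lia. Qed.

Lemma matching_w t : matching (wsplit t) (wU t) (wV t).
Proof.
have le_an : wsplit t <= nn by apply: leq_subr.
split=> // [p /andP[]|q /and3P[-> -> _]|] //.
have -> : count (wU t) (iota 0 nn) = count (wword t) (iota 0 (wsplit t)).
  by rewrite -(count_iota0_ltn _ le_an); apply: eq_count => p; rewrite /wU andbC.
have -> : count (wV t) (iota 0 nn) =
    count (predC (wword t)) (iota 0 nn) - count (predC (wword t)) (iota 0 (wsplit t)).
  rewrite -(count_iota0_geq _ le_an); apply: eq_count_iota0 => q lt_qn.
  by rewrite /wV [q < nn]lt_qn /= andbC.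
rewrite !count_iota0_predC.
have := count_iota0_ub (wword t) (wsplit t); have := leq_count_iota0 (wword t) le_an.
by rewrite /wsplit; lia.
Qed.

Lemma w_distinct_lt t t' : al = dd -> wsplit t < wsplit t' ->
  distinct_patterns G n (wconfig t) (wconfig t').
Proof.
move=> al_dd lt_split; have [le_a'n _ _ _] := matching_w t'.
have lt_an := leq_trans lt_split le_a'n; have a_gt0 := wsplit_gt0 t.
apply: (incr_distinct_patterns (i := 0) (j := wsplit t)) => //;
  try by move=> *; apply: match_config_incr (matching_w _) _ _.
rewrite (adj_match_XY (matching_w t)) // (adj_match_XX (matching_w t')) ?(ltn_trans a_gt0) //.
  by rewrite /wU a_gt0 /= al_dd eq_sym.
by rewrite neq_ltn a_gt0.
Qed.

Lemma w_distinct t t' : al = dd -> t != t' ->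
  distinct_patterns G n (wconfig t) (wconfig t').
Proof.
move=> al_dd ne_tt'; case: (ltngtP (wsplit t) (wsplit t')) => [lt_a|lt_a|eq_a].
- exact: w_distinct_lt.
- exact/distinct_patterns_sym/w_distinct_lt.
have ok := matching_w t; rewrite /wconfig eq_a in ok *.
have [j lt_jn ne_j] := neq_nbit ne_tt'.
apply: (matching_distinct_same_split ok (matching_w t') (_ : j.+1 < nn)) => //.
rewrite /wU /wV eq_a /= ltnS lt_jn /=.
by case: ltnP; move: ne_j; case: (nbit t j); case: (nbit t' j).
Qed.

(* For [al = c]: the marks form an even word (position 0 fixes the parity);
   the first half of them are [X]s and the second half [Y]s (all positions
   are [X]s when there is no mark). *)
Definition eword (t : {ffun 'I_n -> bool}) p :=
  if p is p'.+1 then nbit t p' else odd (count (nbit t) (iota 0 n)).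
Definition ehalf t := (count (eword t) (iota 0 nn))./2.
Definition esplit t :=
  if ehalf t == 0 then nn else count (fun p => count (eword t) (iota 0 p) < ehalf t) (iota 0 nn).
Definition eU t p := (p < esplit t) && eword t p.
Definition eV t q := [&& esplit t <= q, q < nn & eword t q].

Lemma count_eword t : count (eword t) (iota 0 nn) = (ehalf t).*2.
Proof.
rewrite /ehalf; set m := count (nbit t) (iota 0 n).
have -> : count (eword t) (iota 0 nn) = odd m + m by rewrite /= -[1]addn0 iotaDl count_map.
by rewrite even_halfK // oddD oddb addbb.
Qed.

Lemma ltn_esplit t p : ehalf t != 0 -> p < nn ->
  (p < esplit t) = (count (eword t) (iota 0 p) < ehalf t).
Proof.
move=> half_ne0 lt_pn; rewrite /esplit (negbTE half_ne0).
apply: count_iota0_downclosed lt_pn => j j' le_jj'; apply: leq_ltn_trans.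
exact: leq_count_iota0.
Qed.

Lemma esplit_gt0 t : ehalf t != 0 -> 0 < esplit t.
Proof. by move=> half_ne0; rewrite ltn_esplit //= lt0n. Qed.

Lemma esplit_lt t : ehalf t != 0 -> esplit t < nn.
Proof.
move=> half_ne0; rewrite ltnS leqNgt ltn_esplit // -leqNgt.
by have := count_eword t; rewrite count_iota0S; case: (eword t n) => /=; lia.
Qed.

Lemma count_below_esplit t : ehalf t != 0 ->
  count (eword t) (iota 0 (esplit t)) = ehalf t /\ eword t (esplit t).-1.
Proof.
move=> half_ne0; have a_lt := esplit_lt half_ne0.
have [a' a_eq] : exists a', esplit t = a'.+1 by exists (esplit t).-1; rewrite prednK ?esplit_gt0.
have := ltn_esplit half_ne0 a_lt; rewrite a_eq in a_lt *.
have := ltn_esplit half_ne0 (ltnW a_lt).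
by rewrite a_eq ltnn ltnSn count_iota0S; case: (eword t a') => /=; lia.
Qed.

Lemma matching_e t : matching (esplit t) (eU t) (eV t).
Proof.
have le_an : esplit t <= nn.
  by rewrite /esplit; case: (ehalf t == 0) => //; apply: count_iota0_ub.
split=> // [p /andP[]|q /and3P[-> -> _]|] //.
have -> : count (eU t) (iota 0 nn) = count (eword t) (iota 0 (esplit t)).
  by rewrite -(count_iota0_ltn _ le_an); apply: eq_count => p; rewrite /eU andbC.
have -> : count (eV t) (iota 0 nn) =
    count (eword t) (iota 0 nn) - count (eword t) (iota 0 (esplit t)).
  rewrite -(count_iota0_geq _ le_an); apply: eq_count_iota0 => q lt_qn.
  by rewrite /eV [q < nn]lt_qn /= andbC.
case: (eqVneq (ehalf t) 0) => [half_0|half_ne0].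
  by rewrite /esplit half_0 count_eword half_0 subnn.
by have [-> _] := count_below_esplit half_ne0; rewrite count_eword; lia.
Qed.

Lemma eU_last t : ehalf t != 0 -> eU t (esplit t).-1.
Proof.
move=> half_ne0; have [_ mark] := count_below_esplit half_ne0.
by rewrite /eU mark andbT ltn_predL esplit_gt0.
Qed.

Lemma ehalf_neq0 t : esplit t < nn -> ehalf t != 0.
Proof. by rewrite /esplit; case: (ehalf t == 0) => //; rewrite ltnn. Qed.

Definition econfig t := match_config (esplit t) (eU t) (eV t).

Lemma econfig_incr t p p' : p < p' -> p' < nn -> econfig t p < econfig t p'.
Proof. exact: match_config_incr (matching_e t). Qed.

Lemma count_upto_incr (U : pred nat) p p' : p < p' -> U p' -> count_upto U p < count_upto U p'.
Proof.
by move=> lt_pp' Up'; rewrite /count_upto (count_iota0S U p') Up' addn1 ltnS leq_count_iota0.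
Qed.

(* The last marked [X] of [t'] is a [Y] of [t]; paired with [q] or with its
   partner in [t'], it tells the two configurations apart. *)
Lemma e_distinct_twice_matched t t' p q : esplit t < esplit t' -> p < esplit t ->
  esplit t' <= q -> q < nn -> eU t' p -> eV t' q ->
  count_upto (eU t') p = match_count (eV t') q ->
  distinct_patterns G n (econfig t) (econfig t').
Proof.
move=> lt_a lt_pa le_a'q lt_qn U'p V'q cnt_pq.
have ok := matching_e t; have ok' := matching_e t'.
have half'_ne0 : ehalf t' != 0 by apply: ehalf_neq0; apply: leq_ltn_trans lt_qn.
set p1 := (esplit t').-1; have U'p1 : eU t' p1 := eU_last half'_ne0.
have lt_p1a' : p1 < esplit t' by rewrite ltn_predL esplit_gt0.
have le_ap1 : esplit t <= p1 by rewrite -ltnS prednK ?esplit_gt0.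
have lt_p1n : p1 < nn by apply: ltn_trans lt_p1a' (leq_ltn_trans le_a'q lt_qn).
have Y_in_t r : esplit t' <= r -> esplit t <= r by move=> le_a'r; rewrite ltnW // (leq_trans lt_a).
have ne_p1 r : esplit t' <= r -> p1 != r by move=> le_a'r; rewrite ltn_eqF // (leq_trans lt_p1a').
have [q1 [lt_q1n V'q1 cnt_q1]] := matched_partner_X ok' U'p1.
have [_ _ V'_side _] := ok'; have /andP[le_a'q1 _] := V'_side _ V'q1.
have [be_dd|ne_be_dd] := eqVneq be dd.
  apply: (incr_distinct_patterns (i := p1) (j := q)) => //; try exact: econfig_incr.
  rewrite /econfig (adj_match_YY ok) // ?Y_in_t ?ne_p1 //.
  rewrite (adj_match_XY ok') // -cnt_pq.
  by rewrite eqn_leq leqNgt count_upto_incr ?andbF ?be_dd // (leq_trans lt_pa le_ap1).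
apply: (incr_distinct_patterns (i := p1) (j := q1)) => //; try exact: econfig_incr.
rewrite /econfig (adj_match_YY ok) // ?Y_in_t ?ne_p1 //.
by rewrite (adj_match_XY ok') // U'p1 V'q1 cnt_q1 eqxx.
Qed.

Lemma e_distinct_lt t t' : al = c -> esplit t < esplit t' ->
  distinct_patterns G n (econfig t) (econfig t').
Proof.
move=> al_c lt_a; have ok := matching_e t; have ok' := matching_e t'.
have [le_a'n _ _ _] := ok'; have [_ _ V_side _] := ok.
have lt_an := leq_trans lt_a le_a'n; have half_ne0 := ehalf_neq0 lt_an.
set p := (esplit t).-1; have Up : eU t p := eU_last half_ne0.
have lt_pa : p < esplit t by rewrite ltn_predL esplit_gt0.
have lt_pa' := ltn_trans lt_pa lt_a; have lt_pn := ltn_trans lt_pa lt_an.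
have [q [lt_qn Vq cnt_q]] := matched_partner_X ok Up; have /andP[le_aq _] := V_side _ Vq.
have ne_pq : p != q by rewrite ltn_eqF // (leq_trans lt_pa le_aq).
have adj_pq : adj G (econfig t p) (econfig t q) = dd.
  by rewrite /econfig (adj_match_XY ok) // Up Vq cnt_q eqxx.
have [lt_qa'|le_a'q] := ltnP q (esplit t').
  apply: (incr_distinct_patterns (i := p) (j := q)) => //; try exact: econfig_incr.
  by rewrite adj_pq /econfig (adj_match_XX ok') // al_c.
case matched: [&& eU t' p, eV t' q & count_upto (eU t') p == match_count (eV t') q].
  by case/and3P: matched => U'p V'q /eqP; apply: e_distinct_twice_matched.
apply: (incr_distinct_patterns (i := p) (j := q)) => //; try exact: econfig_incr.
by rewrite adj_pq /econfig (adj_match_XY ok') // matched.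
Qed.

Lemma e_distinct t t' : al = c -> t != t' -> distinct_patterns G n (econfig t) (econfig t').
Proof.
move=> al_c ne_tt'; case: (ltngtP (esplit t) (esplit t')) => [lt_a|lt_a|eq_a].
- exact: e_distinct_lt.
- exact/distinct_patterns_sym/e_distinct_lt.
have ok := matching_e t; rewrite /econfig eq_a in ok *.
have [j lt_jn ne_j] := neq_nbit ne_tt'.
apply: (matching_distinct_same_split ok (matching_e t') (_ : j.+1 < nn)) => //.
by rewrite /eU /eV eq_a /= ltnS lt_jn /=; case: ltnP; rewrite /= ?ne_j ?orbT.
Qed.


Lemma matching_card : 2 ^ n <= #|P_n P n.+1|.
Proof.
rewrite -card_bool_ffun; case: (eqVneq al dd) => [al_dd|ne_al_dd].
  apply: (leq_card_P_n (v := wconfig) P_her G_P) => [t|t t']; last exact: w_distinct.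
  exact: match_config_inj (matching_w t).
have al_c : al = c by move: ne_al_dd dd_neq_c; case: al; case: dd; case: c.
apply: (leq_card_P_n (v := econfig) P_her G_P) => [t|t t']; last exact: e_distinct.
exact: match_config_inj (matching_e t).
Qed.

End Matching.
End TwoChains.

Lemma kstruct1_card (P : oprop) N (G : ograph N) k n :
  hereditary P -> G \in P_n P N -> n <= k -> kstruct1 G k -> 2 ^ n <= #|P_n P n.+1|.
Proof.
move=> P_her G_P le_nk [y [x [x_incr [y_out x_alt]]]].
exact: type1_card le_nk x_incr y_out x_alt.
Qed.

Lemma kstruct1_of_monotone N (G : ograph N) m (v : 'I_N) (z : nat -> 'I_N) (up : bool) :
  0 < m -> (forall i j, i < j -> j < 2 * m -> if up then z i < z j else z j < z i) ->
  (forall i, i < 2 * m -> v < z i) \/ (forall i, i < 2 * m -> z i < v) ->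
  (forall i, i.+1 < 2 * m -> adj G v (z i) = ~~ adj G v (z i.+1)) ->
  kstruct1 G m.
Proof.
move=> m_gt0 z_mono v_out z_alt; have lt_0 : 0 < 2 * m by lia.
have lt_last : (2 * m).-1 < 2 * m by lia.
case: up z_mono => z_mono.
  exists v, z; split=> //; split=> //.
  by case: v_out => v_out; [left; apply: v_out | right; apply: v_out].
exists v, (fun i => z ((2 * m).-1 - i)); split=> [i j lt_ij lt_jm|]; first by apply: z_mono; lia.
split; first by case: v_out => v_out; [left; apply: v_out | right; apply: v_out]; lia.
move=> i lt_im; have -> : (2 * m).-1 - i = ((2 * m).-1 - i.+1).+1 by lia.
by rewrite (z_alt ((2 * m).-1 - i.+1)) ?negbK //; lia.
Qed.

Lemma ltn_half_index (B : nat -> nat) K i j :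
  (forall s t, s < t -> t < K -> B s < B t) -> i < j -> j./2 < K ->
  (B i./2).*2 + odd i < (B j./2).*2 + odd j.
Proof.
move=> B_incr lt_ij lt_jK.
have := half_leq (ltnW lt_ij); rewrite leq_eqVlt => /orP[/eqP eq_half|lt_half].
  rewrite eq_half ltn_add2l; move: lt_ij; rewrite -(odd_double_half i) -(odd_double_half j) eq_half.
  by case: (odd i); case: (odd j) => //=; lia.
by rewrite ltn_double_add ?B_incr // neq_ltn B_incr.
Qed.

Local Notation colour := ({ffun bool * bool -> bool} * {ffun bool * bool -> bool} *
                          {ffun bool * bool -> bool} * {ffun bool * bool -> bool})%type.

Section Type2.
Variables (P : oprop) (N : nat) (G : ograph N) (k n : nat) (x y : nat -> 'I_N) (up : bool).
Hypotheses (P_her : hereditary P) (G_P : G \in P_n P N).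
Hypothesis x_incr : incr_upto (2 * k) x.
Hypothesis y_mono : forall i j, i < j -> j < 2 * k -> if up then y i < y j else y j < y i.
Hypothesis x_below_y : forall i j, i < 2 * k -> j < 2 * k -> x i < y j.
Hypothesis diag_alt : forall i, i.+1 < 2 * k -> adj G (x i) (y i) = ~~ adj G (x i.+1) (y i.+1).

Let G_graph : is_graph G. Proof. by move: G_P; rewrite inE => /andP[]. Qed.

Definition xb s (p : bool) := x (s.*2 + p).
Definition yb s (p : bool) := y (s.*2 + p).

Definition block_colour s t : colour :=
  ([ffun pq => adj G (xb s pq.1) (xb t pq.2)], [ffun pq => adj G (yb s pq.1) (yb t pq.2)],
   [ffun pq => adj G (xb s pq.1) (yb t pq.2)], [ffun pq => adj G (xb t pq.2) (yb s pq.1)]).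

Definition diag0 := adj G (x 0) (y 0).

Lemma block_index_lt s (p : bool) : s < k -> s.*2 + p < 2 * k.
Proof. by case: p; lia. Qed.

Lemma xb_incr s t p q : s < t -> t < k -> xb s p < xb t q.
Proof.
move=> lt_st lt_tk; apply: x_incr (block_index_lt _ lt_tk).
by rewrite ltn_double_add ?ltn_eqF.
Qed.

Lemma yb_mono s t p q : s < t -> t < k -> if up then yb s p < yb t q else yb t q < yb s p.
Proof.
move=> lt_st lt_tk; apply: y_mono (block_index_lt _ lt_tk).
by rewrite ltn_double_add ?ltn_eqF.
Qed.

Lemma xb_below_yb s t p q : s < k -> t < k -> xb s p < yb t q.
Proof. by move=> lt_sk lt_tk; apply: x_below_y; apply: block_index_lt. Qed.

Lemma adj_diag s p : s < k -> adj G (xb s p) (yb s p) = diag0 (+) p.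
Proof.
by move=> lt_sk; rewrite (alternating_parity diag_alt) ?block_index_lt ?odd_double_add.
Qed.

Section Homogeneous.
Variables (K : nat) (b : nat -> nat) (kXX kYY kXY kYX : {ffun bool * bool -> bool}).
Hypothesis b_incr : forall i j, i < j -> j < K -> b i < b j.
Hypothesis b_lt : forall i, i < K -> b i < k.
Hypothesis b_colour : forall i j, i < j -> j < K -> block_colour (b i) (b j) = (kXX, kYY, kXY, kYX).

Lemma adj_hom_XY s t p q : s < t -> t < K -> adj G (xb (b s) p) (yb (b t) q) = kXY (p, q).
Proof. by move=> lt_st lt_tK; have := b_colour lt_st lt_tK => -[_ _ <- _]; rewrite ffunE. Qed.

Lemma adj_hom_YX s t p q : s < t -> t < K -> adj G (xb (b t) q) (yb (b s) p) = kYX (p, q).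
Proof. by move=> lt_st lt_tK; have := b_colour lt_st lt_tK => -[_ _ _ <-]; rewrite ffunE. Qed.

Section Parity.
Variable p : bool.
Let X s := xb (b s) p.
Let Y s := yb (b s) p.

Lemma hom_X_incr s t : s < t -> t < K -> X s < X t.
Proof. by move=> lt_st lt_tK; apply: xb_incr; [apply: b_incr | apply: b_lt]. Qed.

Lemma hom_Y_mono s t : s < t -> t < K -> if up then Y s < Y t else Y t < Y s.
Proof. by move=> lt_st lt_tK; apply: yb_mono; [apply: b_incr | apply: b_lt]. Qed.

Lemma hom_X_below_Y s t : s < K -> t < K -> X s < Y t.
Proof. by move=> lt_sK lt_tK; apply: xb_below_yb; apply: b_lt. Qed.

Lemma adj_hom_XX s t : s < K -> t < K -> s != t -> adj G (X s) (X t) = kXX (p, p).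
Proof.
move=> lt_sK lt_tK; case: ltngtP => // [lt_st|lt_ts] _.
  by have := b_colour lt_st lt_tK => -[<- _ _ _]; rewrite ffunE.
by rewrite adj_sym //; have := b_colour lt_ts lt_sK => -[<- _ _ _]; rewrite ffunE.
Qed.

Lemma adj_hom_YY s t : s < K -> t < K -> s != t -> adj G (Y s) (Y t) = kYY (p, p).
Proof.
move=> lt_sK lt_tK; case: ltngtP => // [lt_st|lt_ts] _.
  by have := b_colour lt_st lt_tK => -[_ <- _ _]; rewrite ffunE.
by rewrite adj_sym //; have := b_colour lt_ts lt_sK => -[_ <- _ _]; rewrite ffunE.
Qed.

Lemma hom_crossing_card : kXY (p, p) != kYX (p, p) -> n < K -> 2 ^ n <= #|P_n P n.+1|.
Proof.
move=> ne_XY_YX lt_nK.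
have adj_XY s t : s < K -> t < K -> s != t ->
    adj G (X s) (Y t) = if s < t then kXY (p, p) else kYX (p, p).
  move=> lt_sK lt_tK; case: ltngtP => // [lt_st|lt_ts] _; [exact: adj_hom_XY | exact: adj_hom_YX].
have al_first : kXX (p, p) = if kXX (p, p) == kYX (p, p) then kYX (p, p) else kXY (p, p).
  by move: ne_XY_YX; case: (kXX _); case: (kXY _); case: (kYX _).
exact: (crossing_card P_her G_P hom_X_incr hom_Y_mono hom_X_below_Y adj_hom_XX
          ne_XY_YX adj_XY lt_nK al_first).
Qed.

Lemma hom_matching_card : kXY (p, p) = kYX (p, p) -> diag0 (+) p != kXY (p, p) ->
  (2 * n.+1).+1 * n.+2 <= K -> 2 ^ n <= #|P_n P n.+1|.
Proof.
move=> eq_XY_YX ne_diag le_K.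
have adj_XY s t : s < K -> t < K -> adj G (X s) (Y t) = if s == t then diag0 (+) p else kXY (p, p).
  move=> lt_sK lt_tK; rewrite /X /Y; case: ltngtP => [lt_st|lt_ts|<-].
  - exact: adj_hom_XY.
  - by rewrite eq_XY_YX; apply: adj_hom_YX.
  - by rewrite adj_diag ?b_lt.
exact: (matching_card P_her G_P hom_X_incr hom_Y_mono hom_X_below_Y adj_hom_XX
          adj_hom_YY adj_XY ne_diag le_K).
Qed.

End Parity.

Lemma kstruct1_last_y : kXY (true, false) != kXY (false, false) -> 1 < K -> kstruct1 G K.-1.
Proof.
move=> ne_kXY lt_1K; have K_gt0 : 0 < K.-1 by lia.
have half_lt i : i < 2 * K.-1 -> i./2 < K.-1 by lia.
pose z i := xb (b i./2) (odd i).
have adj_z i : i < 2 * K.-1 -> adj G (yb (b K.-1) false) (z i) = kXY (odd i, false).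
  by move=> /half_lt lt_iK; rewrite adj_sym // adj_hom_XY //; lia.
apply: (@kstruct1_of_monotone _ _ _ (yb (b K.-1) false) z true K_gt0).
- move=> i j lt_ij /half_lt lt_jK; apply: x_incr; last by apply: block_index_lt; apply: b_lt; lia.
  by apply: (ltn_half_index (K := K.-1)) => // s t lt_st lt_tK; apply: b_incr; lia.
- by right=> i /half_lt lt_iK; apply: xb_below_yb; apply: b_lt; lia.
move=> i lt_iK; rewrite !adj_z //; last exact: ltnW.
by move: ne_kXY; rewrite /=; case: (odd i); case: (kXY _); case: (kXY _).
Qed.

Lemma kstruct1_first_x : kXY (true, false) != kXY (true, true) -> 1 < K -> kstruct1 G K.-1.
Proof.
move=> ne_kXY lt_1K; have K_gt0 : 0 < K.-1 by lia.
have half_lt i : i < 2 * K.-1 -> i./2 < K.-1 by lia.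
pose z i := yb (b (i./2).+1) (odd i).
apply: (@kstruct1_of_monotone _ _ _ (xb (b 0) true) z up K_gt0).
- move=> i j lt_ij /half_lt lt_jK; apply: y_mono; last by apply: block_index_lt; apply: b_lt; lia.
  apply: (ltn_half_index (K := K.-1) (B := fun s => b s.+1)) => // s t lt_st lt_tK.
  by apply: b_incr; lia.
- by left=> i /half_lt lt_iK; apply: xb_below_yb; apply: b_lt; lia.
move=> i lt_iK; rewrite !adj_hom_XY //; try lia.
by move: ne_kXY; rewrite /=; case: (odd i); case: (kXY _); case: (kXY _).
Qed.

End Homogeneous.

Definition type2_blocks := (2 * n.+1).+1 * n.+2.

Lemma type2_card :
  ramsey_bound colour (#|{: colour}| * type2_blocks) <= k -> 2 ^ n <= #|P_n P n.+1|.
Proof.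
move=> le_k; have colour_gt0 : 0 < #|{: colour}| by apply/card_gt0P; exists (block_colour 0 0).
have [b [kappa [b_incr b_lt b_col]]] := ramsey_pairs block_colour type2_blocks colour_gt0.
have {b_lt} b_lt i : i < type2_blocks -> b i < k by move=> /b_lt lt_b; apply: leq_trans lt_b le_k.
case: kappa b_col => [[[kXX kYY] kXY] kYX] b_col.
case: (boolP [exists p, kXY (p, p) != kYX (p, p)]) => [/existsP[p ne_p]|].
  by apply: (hom_crossing_card b_incr b_lt b_col ne_p); rewrite /type2_blocks; nia.
rewrite negb_exists => /forallP eq_XY_YX.
case: (boolP [exists p, diag0 (+) p != kXY (p, p)]) => [/existsP[p ne_p]|].
  by apply: (hom_matching_card b_incr b_lt b_col _ ne_p) => //; apply/eqP/negPn/eq_XY_YX.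
rewrite negb_exists => /forallP diag_eq.
have kXY_diag p : kXY (p, p) = diag0 (+) p by apply/esym/eqP/negPn/diag_eq.
have lt_1K : 1 < type2_blocks by rewrite /type2_blocks; nia.
apply: (kstruct1_card P_her G_P (_ : n <= type2_blocks.-1)); first by rewrite /type2_blocks; nia.
have [eq_kXY|ne_kXY] := eqVneq (kXY (true, false)) (kXY (false, false)).
  by apply: (kstruct1_first_x b_incr b_lt b_col) lt_1K; rewrite eq_kXY !kXY_diag; case: diag0.
exact: (kstruct1_last_y b_incr b_lt b_col).
Qed.

End Type2.

Lemma kstruct2_card (P : oprop) N (G : ograph N) k n :
  hereditary P -> G \in P_n P N -> ramsey_bound colour (#|{: colour}| * type2_blocks n) <= k ->
  kstruct2 G k -> 2 ^ n <= #|P_n P n.+1|.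
Proof.
move=> P_her G_P le_k
  [[x [y [x_incr [y_incr [lt_xy diag_alt]]]]]|[x [y [x_incr [y_decr [lt_xy diag_alt]]]]]].
- apply: (type2_card (up := true) P_her G_P x_incr y_incr _ diag_alt le_k) => i j lt_ik lt_jk.
  apply: leq_ltn_trans (incr_upto_leq (j := (2 * k).-1) x_incr _ _) _; try lia.
  by apply: leq_trans lt_xy (incr_upto_leq y_incr _ _).
- apply: (type2_card (up := false) P_her G_P x_incr y_decr _ diag_alt le_k) => i j lt_ik lt_jk.
  apply: leq_ltn_trans (incr_upto_leq (j := (2 * k).-1) x_incr _ _) _; try lia.
  by apply: leq_trans lt_xy (decr_upto_leq y_decr _ _); lia.
Qed.

Lemma card_P_n0_gt0 (P : oprop) N (G : ograph N) :
  hereditary P -> G \in P_n P N -> 0 < #|P_n P 0|.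
Proof.
move=> P_her G_P; have f : 'I_0 -> 'I_N by case.
by rewrite card_gt0; apply/set0Pn; exists (induced G f); apply: induced_in_P_n => // [[]].
Qed.

Theorem lemma5 (P : oprop) :
  hereditary P ->
  (forall K : nat, exists k : nat, K <= k /\
     exists (n : nat) (G : ograph n),
       G \in P_n P n /\ (kstruct1 G k \/ kstruct2 G k)) ->
  forall n : nat, 2 ^ (n - 1) <= #|P_n P n|.
Proof.
move=> P_her large [|n].
  by have [_ [_ [N [G [G_P _]]]]] := large 0; apply: card_P_n0_gt0 P_her G_P.
rewrite subn1 /=.
have [k [le_k [N [G [G_P [struct1|struct2]]]]]] :=
  large (ramsey_bound colour (#|{: colour}| * type2_blocks n) + n).
- by apply: (kstruct1_card P_her G_P _ struct1); lia.
- by apply: (kstruct2_card P_her G_P _ struct2); lia.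
Qed.
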